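(* Let $K$ be a circle of radius $1$ and centre $O$. Let $A,B\in K$ be such that the triangle $OAB$ is positively (counter-clockwise) oriented and $\eta=\angle BOA<1/5$. Let $K_A$ and $K_B$ be the circles obtained by rotating $K$ about the points $A$ and $B$ in the positive direction by the angles $\alpha$ and $\beta$ respectively, where $0<\alpha<3\beta/4$ and $\beta<\eta$. Then one of the intersection points of $K_A$ and $K_B$ lies inside $K$, and its distance from $A$ is less than $20\eta$.
   Context: The positive direction of rotation is counter-clockwise. *)

From Stdlib Require Import Reals Lra.
Open Scope R_scope.

Definition point := (R * R)%type.

Definition pdist (P Q : point) : R :=
  sqrt ((fst P - fst Q)^2 + (snd P - snd Q)^2).

Definition angle (P O Q : point) : R :=
  acos (((fst P - fst O) * (fst Q - fst O) + (snd P - snd O) * (snd Q - snd O))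
        / (pdist P O * pdist Q O)).

Definition ccw (P Q S : point) : Prop :=
  (fst Q - fst P) * (snd S - snd P) - (snd Q - snd P) * (fst S - fst P) > 0.

Definition rotate (C : point) (t : R) (X : point) : point :=
  (fst C + cos t * (fst X - fst C) - sin t * (snd X - snd C),
   snd C + sin t * (fst X - fst C) + cos t * (snd X - snd C)).

(** In the orthonormal frame with origin O and first axis OA, one has
    A = (1, 0) and B = (cos eta, sin eta), and the rotated circles are the
    unit circles centred at (1 - cos alpha, - sin alpha) and at
    (cos eta - cos (eta + beta), sin eta - sin (eta + beta)).  Walk along
    K_A from A, through the point (1 - cos alpha + cos z, sin z - sin alpha)
    with z increasing from alpha: at z = alpha the point is A, which lies
    inside K_B, while at z = 10 eta it lies outside K_B (a half-angle
    product-to-sum expansion of the squared distance and Taylor bounds on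
    sin).  By the intermediate value theorem some z in between gives a point
    of K_A on K_B; it lies inside K (for alpha < z < pi - alpha the arc of K_A
    leaving A goes into K) and its distance to A is the chord
    2 sin ((z - alpha) / 2) < z - alpha <= 10 eta. *)

From Stdlib Require Import Reals Lra Psatz.
Open Scope R_scope.

Lemma sin_ge_cubic x : 0 <= x -> x <= PI -> x - x ^ 3 / 6 <= sin x.
Proof.
  intros Hx0 HxPI. destruct (sin_bound x 0 Hx0 HxPI) as [Hlow _].
  unfold sin_approx, sin_term in Hlow; simpl in Hlow. lra.
Qed.

Lemma sin_sq_add_cos_sq x : sin x ^ 2 + cos x ^ 2 = 1.
Proof. pose proof (sin2_cos2 x) as H. unfold Rsqr in H. lra. Qed.

Lemma cos_sub_eq u v p : p = u - v -> cos p = cos u * cos v + sin u * sin v.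
Proof. intros ->. apply cos_minus. Qed.

Lemma sin_mul_sin_eq u v p q :
  p = u - v -> q = u + v -> sin u * sin v = (cos p - cos q) / 2.
Proof. intros -> ->. rewrite cos_minus, cos_plus. field. Qed.

Lemma sin_mul_sin_eq_sym u v p q :
  p = v - u -> q = u + v -> sin u * sin v = (cos p - cos q) / 2.
Proof. intros -> ->. rewrite cos_minus, cos_plus. field. Qed.

Lemma cos_mul_cos_eq u v p q :
  p = u - v -> q = u + v -> cos u * cos v = (cos p + cos q) / 2.
Proof. intros -> ->. rewrite cos_minus, cos_plus. field. Qed.

(* In the frame where O = (0, 0) and A = (1, 0): the squared distance, minus 1,
   from the point of K_A in direction z to the centre of K_B. *)
Definition excess (alpha beta eta z : R) : R :=
  (1 - cos alpha + cos z - (cos eta - cos (eta + beta))) ^ 2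
  + (sin z - sin alpha - (sin eta - sin (eta + beta))) ^ 2 - 1.

Lemma excess_half_angles a b e x :
  excess (2 * a) (2 * b) e (2 * x)
  = 4 * (sin b * sin b + sin b * sin (e - 2 * a + b)
         + 2 * cos x * (sin b * sin (x - e - b) - sin a * sin (x - a))).
Proof.
  unfold excess.
  set (Z := 2 * (2 - cos (2*b) + cos (e-2*a) - cos (e-2*a+2*b) + cos (2*x-2*b-e)
     + cos (e+2*b) - cos e - cos (2*x-e) - cos (2*x-2*a) - cos (2*a) + cos (2*x))).
  transitivity Z; unfold Z.
  - rewrite (cos_sub_eq (e+2*b) e (2*b)) by ring.
    rewrite (cos_sub_eq e (2*a) (e-2*a)) by ring.
    rewrite (cos_sub_eq (e+2*b) (2*a) (e-2*a+2*b)) by ring.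
    rewrite (cos_sub_eq (2*x) (e+2*b) (2*x-2*b-e)) by ring.
    rewrite (cos_sub_eq (2*x) e (2*x-e)) by ring.
    rewrite (cos_sub_eq (2*x) (2*a) (2*x-2*a)) by ring.
    pose proof (sin_sq_add_cos_sq (2*a)). pose proof (sin_sq_add_cos_sq (2*x)).
    pose proof (sin_sq_add_cos_sq e). pose proof (sin_sq_add_cos_sq (e+2*b)).
    lra.
  - rewrite (sin_mul_sin_eq b b 0 (2*b)) by ring.
    rewrite (sin_mul_sin_eq_sym b (e-2*a+b) (e-2*a) (e-2*a+2*b)) by ring.
    rewrite (sin_mul_sin_eq_sym b (x-e-b) (x-e-2*b) (x-e)) by ring.
    rewrite (sin_mul_sin_eq_sym a (x-a) (x-2*a) x) by ring.
    assert (cos x * cos (x-e-2*b) = (cos (e+2*b) + cos (2*x-2*b-e)) / 2)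
      by (apply cos_mul_cos_eq; ring).
    assert (cos x * cos (x-e) = (cos e + cos (2*x-e)) / 2)
      by (apply cos_mul_cos_eq; ring).
    assert (cos x * cos (x-2*a) = (cos (2*a) + cos (2*x-2*a)) / 2)
      by (apply cos_mul_cos_eq; ring).
    assert (cos x * cos x = (cos 0 + cos (2*x)) / 2)
      by (apply cos_mul_cos_eq; ring).
    rewrite cos_0 in *. nra.
Qed.

Lemma excess_at_alpha alpha b e :
  0 < b -> 0 < e -> e + b <= PI / 2 -> excess alpha (2 * b) e alpha < 0.
Proof.
  intros Hb He HebPI.
  replace (excess alpha (2 * b) e alpha) with (excess (2 * 0) (2 * b) e (2 * 0))
    by (unfold excess; replace (2 * 0) with 0 by ring; rewrite cos_0, sin_0; ring).
  rewrite excess_half_angles, sin_0, cos_0.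
  replace (0 - e - b) with (- (e + b)) by ring.
  replace (e - 2 * 0 + b) with (e + b) by ring.
  rewrite sin_neg.
  pose proof PI2_1.
  assert (sin b < sin (e + b)) by (apply sin_increasing_1; lra).
  assert (0 < sin b) by (apply sin_gt_0; lra).
  nra.
Qed.

Lemma excess_far_bound_poly a b e :
  0 < a -> a < 3 * b / 4 -> 0 < b -> b < e / 2 -> e < 1 / 5 ->
  0 < 998/1000 * b * (998/1000 * b + (e - 2*a + b) * (1 - 375/1000 * e * e)
                      + 2 * (4*e - b) * (1 - 8 * e * e / 3))
      - 2 * a * (5*e - a).
Proof.
  intros.
  assert (He2 : e * e < 4/100) by nra.
  assert (Hcubic : (e - 2*a + b) * (375/1000 * e * e) + 2 * (4*e - b) * (8 * e * e / 3)
                   <= 88/100 * e).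
  { assert (0 <= e - 2*a + b <= 3/2 * e) by lra.
    assert (0 <= 4*e - b <= 4 * e) by lra.
    assert ((e - 2*a + b) * (e * e) <= 3/2 * e * (4/100)) by nra.
    assert ((4*e - b) * (e * e) <= 4 * e * (4/100)) by nra.
    nra. }
  assert (0 < 998/1000 * b * (9*e - 2*a - 2/1000 * b - 88/100 * e) - 10*a*e + 2*a*a)
    by nra.
  nra.
Qed.

Lemma excess_half_angles_far_pos a b e :
  0 < a -> a < 3 * b / 4 -> 0 < b -> b < e / 2 -> e < 1 / 5 ->
  0 < sin b * sin b + sin b * sin (e - 2*a + b)
      + 2 * cos (5*e) * (sin b * sin (5*e - e - b) - sin a * sin (5*e - a)).
Proof.
  intros Ha Hab Hb Hbe He.
  pose proof PI2_3_2.
  assert (Hsb : 998/1000 * b <= sin b).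
  { pose proof (sin_ge_cubic b ltac:(lra) ltac:(lra)). nra. }
  set (y2 := e - 2*a + b).
  assert (Hsy2 : y2 * (1 - 375/1000 * e * e) <= sin y2).
  { assert (0 <= y2 <= 3/2 * e) by (unfold y2; lra).
    pose proof (sin_ge_cubic y2 ltac:(lra) ltac:(lra)).
    assert (y2 * y2 <= 9/4 * e * e) by nra. nra. }
  replace (5*e - e - b) with (4*e - b) by ring.
  set (y1 := 4*e - b).
  assert (Hsy1 : y1 * (1 - 8 * e * e / 3) <= sin y1).
  { assert (0 <= y1 <= 4 * e) by (unfold y1; lra).
    pose proof (sin_ge_cubic y1 ltac:(lra) ltac:(lra)).
    assert (y1 * y1 <= 16 * e * e) by nra. nra. }
  assert (0 <= sin a <= a).
  { split; [apply sin_ge_0 | left; apply sin_lt_x]; lra. }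
  assert (0 <= sin (5*e - a) <= 5*e - a).
  { split; [apply sin_ge_0 | left; apply sin_lt_x]; lra. }
  assert (0 <= cos (5*e) <= 1) by (split; [apply cos_ge_0 | apply COS_bound]; lra).
  pose proof (excess_far_bound_poly a b e Ha Hab Hb Hbe He) as Hpoly.
  fold y1 y2 in Hpoly.
  assert (0 < y1 * (1 - 8 * e * e / 3)) by (unfold y1; nra).
  assert (0 < y2 * (1 - 375/1000 * e * e)) by (unfold y2; nra).
  assert (sin a * sin (5*e - a) <= a * (5*e - a)) by nra.
  set (M := sin b * sin y1 - sin a * sin (5*e - a)).
  assert (0 < sin b * sin b + sin b * sin y2 + 2 * M).
  { assert (sin b * (sin b + sin y2 + 2 * sin y1) >=
            998/1000 * b * (998/1000 * b + y2 * (1 - 375/1000 * e * e)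
                            + 2 * y1 * (1 - 8 * e * e / 3))).
    { apply Rle_ge, Rmult_le_compat; nra. }
    unfold M. nra. }
  (* As 0 <= cos (5 e) <= 1, the last term is at least min 0 (2 M). *)
  destruct (Rle_lt_dec 0 M); [assert (0 < sin y2) by nra |]; nra.
Qed.

Lemma excess_root alpha beta eta :
  0 < alpha -> alpha < 3 * beta / 4 -> beta < eta -> eta < 1 / 5 ->
  exists z, alpha < z <= 10 * eta /\ excess alpha beta eta z = 0.
Proof.
  intros Hal Hab Hbe He.
  set (a := alpha / 2). assert (Ea : alpha = 2 * a) by (unfold a; field).
  set (b := beta / 2). assert (Eb : beta = 2 * b) by (unfold b; field).
  clearbody a b. subst alpha beta.
  pose proof PI2_1.
  assert (Hneg : excess (2 * a) (2 * b) eta (2 * a) < 0)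
    by (apply excess_at_alpha; lra).
  assert (Hpos : 0 < excess (2 * a) (2 * b) eta (2 * (5 * eta))).
  { rewrite excess_half_angles.
    apply Rmult_lt_0_compat; [lra |].
    apply excess_half_angles_far_pos; lra. }
  assert (Hcont : continuity (excess (2 * a) (2 * b) eta)) by (unfold excess; reg).
  destruct (IVT _ (2 * a) (2 * (5 * eta)) Hcont ltac:(lra) Hneg Hpos) as [z [Hz Hroot]].
  exists z. split; [| exact Hroot].
  destruct (Req_dec z (2 * a)) as [->|]; lra.
Qed.

Lemma K_A_point_in_unit_disc alpha z :
  0 < alpha < z -> z + alpha < PI ->
  (1 - cos alpha + cos z) ^ 2 + (sin z - sin alpha) ^ 2 < 1.
Proof.
  intros Hz HzPI.
  set (w := z / 2). assert (Ew : z = 2 * w) by (unfold w; field).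
  set (a := alpha / 2). assert (Ea : alpha = 2 * a) by (unfold a; field).
  clearbody w a. subst z alpha.
  assert (0 < sin (w - a)) by (apply sin_gt_0; lra).
  assert (sin (w - a) < sin (w + a)) by (apply sin_increasing_1; lra).
  assert (cos (2*w) - cos (2*a) = -2 * (sin (w - a) * sin (w + a))).
  { rewrite (sin_mul_sin_eq_sym (w-a) (w+a) (2*a) (2*w)) by ring. lra. }
  assert (1 - cos (2*w - 2*a) = 2 * (sin (w - a) * sin (w - a))).
  { rewrite (sin_mul_sin_eq (w-a) (w-a) 0 (2*w - 2*a)) by ring. rewrite cos_0. lra. }
  rewrite (cos_sub_eq (2*w) (2*a) (2*w - 2*a)) in * by ring.
  pose proof (sin_sq_add_cos_sq (2*w)). pose proof (sin_sq_add_cos_sq (2*a)).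
  nra.
Qed.

Lemma chord_lt_arc alpha z :
  alpha < z -> z - alpha < 2 * PI ->
  (cos z - cos alpha) ^ 2 + (sin z - sin alpha) ^ 2 < (z - alpha) ^ 2.
Proof.
  intros Hz HzPI.
  set (h := (z - alpha) / 2).
  assert (0 < h) by (unfold h; lra).
  assert (0 < sin h) by (apply sin_gt_0; unfold h; lra).
  assert (sin h < h) by (apply sin_lt_x; lra).
  assert (1 - cos (z - alpha) = 2 * (sin h * sin h)).
  { rewrite (sin_mul_sin_eq h h 0 (z - alpha)) by (unfold h; field).
    rewrite cos_0. lra. }
  rewrite (cos_sub_eq z alpha (z - alpha)) in * by ring.
  pose proof (sin_sq_add_cos_sq z). pose proof (sin_sq_add_cos_sq alpha).
  replace (z - alpha) with (2 * h) by (unfold h; field).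
  nra.
Qed.

Definition frame (O : point) (u1 u2 p q : R) : point :=
  (fst O + p * u1 - q * u2, snd O + p * u2 + q * u1).

Lemma pdist_frame O u1 u2 p q p' q' :
  u1 ^ 2 + u2 ^ 2 = 1 ->
  pdist (frame O u1 u2 p q) (frame O u1 u2 p' q') = sqrt ((p - p') ^ 2 + (q - q') ^ 2).
Proof.
  intros Hu. unfold pdist, frame; simpl. f_equal.
  transitivity (((p - p') ^ 2 + (q - q') ^ 2) * (u1 ^ 2 + u2 ^ 2)); [ring |].
  rewrite Hu. ring.
Qed.

Lemma frame_origin O u1 u2 : frame O u1 u2 0 0 = O.
Proof. destruct O. unfold frame; simpl. f_equal; ring. Qed.

Lemma pdist_frame_origin O u1 u2 p q :
  u1 ^ 2 + u2 ^ 2 = 1 -> pdist (frame O u1 u2 p q) O = sqrt (p ^ 2 + q ^ 2).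
Proof.
  intros Hu. rewrite <- (frame_origin O u1 u2) at 2.
  rewrite pdist_frame by exact Hu. f_equal. ring.
Qed.

Lemma rotate_frame O u1 u2 p q t p' q' :
  rotate (frame O u1 u2 p q) t (frame O u1 u2 p' q')
  = frame O u1 u2 (p + cos t * (p' - p) - sin t * (q' - q))
                  (q + sin t * (p' - p) + cos t * (q' - q)).
Proof. unfold rotate, frame; simpl. f_equal; ring. Qed.

Lemma rotate_origin_about_unit_point O u1 u2 th t :
  rotate (frame O u1 u2 (cos th) (sin th)) t O
  = frame O u1 u2 (cos th - cos (th + t)) (sin th - sin (th + t)).
Proof.
  rewrite <- (frame_origin O u1 u2) at 2.
  rewrite rotate_frame, cos_plus, sin_plus. f_equal; ring.
Qed.

Lemma sum_sq_nonneg x y : 0 <= x ^ 2 + y ^ 2.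
Proof. apply Rplus_le_le_0_compat; apply pow2_ge_0. Qed.

Lemma pdist_eq1_sq P Q :
  pdist P Q = 1 -> (fst P - fst Q) ^ 2 + (snd P - snd Q) ^ 2 = 1.
Proof.
  unfold pdist. intros H.
  rewrite <- (sqrt_sqrt _ (sum_sq_nonneg _ _)), H. ring.
Qed.

Lemma acos_unit_pair c s :
  c ^ 2 + s ^ 2 = 1 -> 0 < s ->
  cos (acos c) = c /\ sin (acos c) = s /\ 0 < acos c.
Proof.
  intros Hcs Hs.
  assert (Hc : -1 <= c <= 1) by nra.
  assert (Hsin : sin (acos c) = s).
  { rewrite sin_acos by exact Hc.
    replace (1 - c²) with (s ^ 2) by (unfold Rsqr; lra). apply sqrt_pow2; lra. }
  split; [apply cos_acos, Hc | split; [exact Hsin |]].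
  destruct (acos_bound c) as [Hge0 _].
  destruct (Req_dec (acos c) 0) as [E|]; [| lra].
  rewrite E, sin_0 in Hsin. lra.
Qed.

Lemma unit_ccw_frame O A B :
  pdist A O = 1 -> pdist B O = 1 -> ccw O A B ->
  exists u1 u2, u1 ^ 2 + u2 ^ 2 = 1 /\
    A = frame O u1 u2 1 0 /\
    B = frame O u1 u2 (cos (angle B O A)) (sin (angle B O A)) /\
    0 < angle B O A.
Proof.
  intros HA HB Hccw.
  set (u1 := fst A - fst O). set (u2 := snd A - snd O).
  set (v1 := fst B - fst O). set (v2 := snd B - snd O).
  pose proof (pdist_eq1_sq _ _ HA) as Hu. pose proof (pdist_eq1_sq _ _ HB) as Hv.
  fold u1 u2 in Hu. fold v1 v2 in Hv.
  set (c := v1 * u1 + v2 * u2). set (s := u1 * v2 - u2 * v1).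
  assert (Hangle : angle B O A = acos c).
  { unfold angle. rewrite HA, HB. f_equal. unfold c, v1, v2, u1, u2. field. }
  assert (Hcs : c ^ 2 + s ^ 2 = 1).
  { transitivity ((u1 ^ 2 + u2 ^ 2) * (v1 ^ 2 + v2 ^ 2)); [unfold c, s; ring |].
    rewrite Hu, Hv. ring. }
  assert (Hs : 0 < s) by (unfold ccw in Hccw; unfold s, u1, u2, v1, v2; lra).
  destruct (acos_unit_pair c s Hcs Hs) as (Hcos & Hsin & Hpos).
  exists u1, u2. rewrite Hangle, Hcos, Hsin.
  split; [exact Hu | split; [| split; [| exact Hpos]]].
  - destruct A as [a1 a2]. unfold frame, u1, u2; simpl. f_equal; ring.
  - destruct B as [b1 b2]. unfold frame.
    transitivity (fst O + v1 * (u1 ^ 2 + u2 ^ 2), snd O + v2 * (u1 ^ 2 + u2 ^ 2)).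
    + rewrite Hu. unfold v1, v2; simpl. f_equal; ring.
    + unfold c, s. f_equal; ring.
Qed.

Theorem lemma2 (O A B : point) (alpha beta : R) :
  pdist A O = 1 -> pdist B O = 1 ->
  ccw O A B ->
  angle B O A < 1/5 ->
  0 < alpha -> alpha < 3 * beta / 4 -> beta < angle B O A ->
  exists P : point,
    pdist P (rotate A alpha O) = 1 /\ pdist P (rotate B beta O) = 1 /\
    pdist P O < 1 /\ pdist P A < 20 * angle B O A.
Proof.
  intros HA HB Hccw Heta Hal Hab Hbe.
  destruct (unit_ccw_frame O A B HA HB Hccw) as (u1 & u2 & Hu & EA & EB & Heta0).
  set (eta := angle B O A) in *. clearbody eta. subst A B. clear HA HB Hccw.
  destruct (excess_root alpha beta eta) as (z & Hz & Hroot); try lra.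
  pose proof PI2_3_2.
  exists (frame O u1 u2 (1 - cos alpha + cos z) (sin z - sin alpha)).
  replace (frame O u1 u2 1 0) with (frame O u1 u2 (cos 0) (sin 0))
    by now rewrite cos_0, sin_0.
  rewrite !rotate_origin_about_unit_point, !pdist_frame, pdist_frame_origin
    by exact Hu.
  rewrite Rplus_0_l, cos_0, sin_0.
  split; [| split; [| split]].
  - etransitivity; [| exact sqrt_1]. f_equal.
    pose proof (sin_sq_add_cos_sq z). lra.
  - etransitivity; [| exact sqrt_1]. f_equal. unfold excess in Hroot. lra.
  - apply (Rlt_le_trans _ (sqrt 1)); [| now rewrite sqrt_1].
    apply sqrt_lt_1_alt. split; [apply sum_sq_nonneg |].
    apply K_A_point_in_unit_disc; lra.
  - rewrite <- (sqrt_pow2 (20 * eta)) by lra.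
    apply sqrt_lt_1_alt. split; [apply sum_sq_nonneg |].
    pose proof (chord_lt_arc alpha z ltac:(lra) ltac:(lra)).
    replace (1 - cos alpha + cos z - 1) with (cos z - cos alpha) by ring.
    replace (sin z - sin alpha - 0) with (sin z - sin alpha) by ring.
    nra.
Qed.
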